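(* Let $\mathbb{X}$ be a Banach space, $\varphi:\mathbb{X}\to\mathbb{R}\cup\{+\infty\}$ a proper lower semicontinuous function, $\mathbf{S}_\varphi:=\{x:\varphi(x)\le0\}$ and $\bar x\in\mathbf{S}_\varphi$. Assume ${\rm bd}(\mathbf{S}_\varphi)\subseteq\varphi^{-1}(0)$, $\varphi$ has the epigraphical Shapiro first order contact property at $\bar x$, and $\mathbf{S}_\varphi$ has the Shapiro first order contact property around $\bar x$. For $x\in\mathbb{X}$ put $S_x:=\{u\in\mathbb{X}:\varphi'_H(x;u)\le0\}$. (i) If there exist $\tau,\delta_0>0$ with $\mathbf{d}(x,\mathbf{S}_\varphi)\le\tau\max\{\varphi(x),0\}$ for all $x\in\mathbf{B}(\bar x,\delta_0)$, then there exists $\delta>0$ such that for every $x\in{\rm bd}(\mathbf{S}_\varphi)\cap\mathbf{B}(\bar x,\delta)$, $$\mathbf{d}(h,S_x)\le\tau\max\{\varphi'_H(x;h),0\}\quad\text{for all }h\in\mathbb{X}.$$ (ii) Suppose there is a neighborhood $U$ of $\bar x$ such that $\{h\in\mathbb{X}:\varphi'_H(x;h)=0\}\subseteq\mathbf{T}^{\mathbf B}(\mathbf{S}_\varphi,x)$ for all $x\in U\cap{\rm bd}(\mathbf{S}_\varphi)$. Then the inequality $\varphi(x)\le0$ has a local error bound at $\bar x$ if and only if there exist $\tau,\delta>0$ such that for every $x\in{\rm bd}(\mathbf{S}_\varphi)\cap\mathbf{B}(\bar x,\delta)$, $\mathbf{d}(h,S_x)\le\tau\max\{\varphi'_H(x;h),0\}$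 for all $h\in\mathbb{X}$.
   Context: $\mathbf{B}(a,\delta)$ is the open ball with center $a$ and radius $\delta$; ${\rm bd}$ denotes boundary; $\mathbf{d}(x,D):=\inf\{\|x-y\|:y\in D\}$. $\varphi'_H(x;h):=\liminf_{t\to0^+,\,h'\to h}\frac{\varphi(x+th')-\varphi(x)}{t}$. Bouligand tangent cone $\mathbf{T}^{\mathbf B}(C,c)$: all $v$ with $v_n\to v$, $t_n\downarrow0$, $c+t_nv_n\in C$. A closed set $C$ has the Shapiro first order contact property at $a\in C$ if for every $\varepsilon>0$ there is $\delta>0$ with $\mathbf{d}(x-u,\mathbf{T}^{\mathbf B}(C,u))\le\varepsilon\|x-u\|$ for all $x,u\in C\cap\mathbf{B}(a,\delta)$; around $\bar x$ means at every point of $C\cap U$ for some neighborhood $U$ of $\bar x$. Epigraphical Shapiro first order contact property at $\bar x$: ${\rm epi}(\varphi)\subseteq\mathbb{X}\times\mathbb{R}$ (norm $\|x\|+|\alpha|$) has the Shapiro first order contact property at $(\bar x,\varphi(\bar x))$. Local error bound at $\bar x$: there exist $\tau,\delta>0$ with $\mathbf{d}(x,\mathbf{S}_\varphi)\le\tau\max\{\varphi(x),0\}$ for all $x\in\mathbf{B}(\bar x,\delta)$. *)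

From HB Require Import structures.
From mathcomp Require Import all_boot all_order all_algebra.
From mathcomp Require Import all_classical all_reals all_analysis.
Set Implicit Arguments. Unset Strict Implicit. Unset Printing Implicit Defensive.
Import Order.TTheory GRing.Theory Num.Theory.
Import numFieldNormedType.Exports.
Local Open Scope classical_set_scope.
Local Open Scope ring_scope.

Section Defs.
Context {R : realType} {X : normedModType R}.

Definition bd (A : set X) : set X := closure A `\` interior A.

(* d(x, D) = inf { ||x - y|| : y in D }, extended-real valued (+oo if D empty) *)
Definition dist (x : X) (D : set X) : \bar R :=
  ereal_inf [set (`|x - y|)%:E | y in D].

Definition Sphi (phi : X -> \bar R) : set X := [set x | (phi x <= 0)%E].

Definition proper_fun (phi : X -> \bar R) : Prop :=
  (forall x, phi x != -oo%E) /\ (exists x, (phi x < +oo)%E).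

(* lower Dini-Hadamard directional derivative:
   liminf_{t -> 0+, h' -> h} (phi(x + t h') - phi(x)) / t,
   written as sup over eps > 0 of the inf over 0 < t < eps, ||h' - h|| < eps *)
Definition dH (phi : X -> \bar R) (x h : X) : \bar R :=
  ereal_sup [set ereal_inf
      [set ((phi (x + th.1 *: th.2)%R - phi x) * (th.1^-1)%:E)%E
        | th in [set th : R * X | 0 < th.1 < eps /\ `|th.2 - h| < eps]]
    | eps in [set eps : R | 0 < eps]].

Definition tangent_cone (C : set X) (c : X) : set X :=
  [set v | exists (vn : nat -> X) (tn : nat -> R),
      vn @ \oo --> v /\ (forall n, 0 < tn n) /\ tn @ \oo --> 0 /\
      (forall n, C (c + tn n *: vn n))].

Definition shapiro_at (C : set X) (a : X) : Prop :=
  forall eps : R, 0 < eps -> exists2 delta : R, 0 < delta &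
    forall x u, C x -> C u -> `|x - a| < delta -> `|u - a| < delta ->
      (dist (x - u)%R (tangent_cone C u) <= (eps * `|x - u|)%:E)%E.

Definition shapiro_around (C : set X) (abar : X) : Prop :=
  exists2 U, nbhs abar U & forall a, C a -> U a -> shapiro_at C a.

Definition epi (phi : X -> \bar R) : set (X * R) :=
  [set p | (phi p.1 <= p.2%:E)%E].

(* Bouligand tangent cone of epi(phi) at (u, beta) (convergence in X x R
   is componentwise, independent of the chosen product norm) *)
Definition epi_tangent_cone (phi : X -> \bar R) (u : X) (beta : R)
  : set (X * R) :=
  [set vw | exists (vn : nat -> X) (wn : nat -> R) (tn : nat -> R),
      vn @ \oo --> vw.1 /\ wn @ \oo --> vw.2 /\
      (forall n, 0 < tn n) /\ tn @ \oo --> 0 /\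
      (forall n, epi phi (u + tn n *: vn n, beta + tn n * wn n))].

Definition dist_sum (p : X * R) (D : set (X * R)) : \bar R :=
  ereal_inf [set (`|p.1 - q.1| + `|p.2 - q.2|)%:E | q in D].

(* epigraphical Shapiro first order contact property at xbar:
   epi(phi) has the Shapiro property at (xbar, phi xbar) w.r.t. ||x||+|alpha| *)
Definition epi_shapiro_at (phi : X -> \bar R) (xbar : X) : Prop :=
  forall eps : R, 0 < eps -> exists2 delta : R, 0 < delta &
    forall p q, epi phi p -> epi phi q ->
      (`|p.1 - xbar|%:E + `|p.2%:E - phi xbar| < delta%:E)%E ->
      (`|q.1 - xbar|%:E + `|q.2%:E - phi xbar| < delta%:E)%E ->
      (dist_sum ((p.1 - q.1)%R, (p.2 - q.2)%R) (epi_tangent_cone phi q.1 q.2)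
        <= (eps * (`|p.1 - q.1| + `|p.2 - q.2|))%:E)%E.

Definition local_error_bound (phi : X -> \bar R) (xbar : X) : Prop :=
  exists tau delta : R, [/\ 0 < tau, 0 < delta &
    forall x, `|x - xbar| < delta ->
      (dist x (Sphi phi) <= tau%:E * maxe (phi x) 0)%E].

Definition Sx (phi : X -> \bar R) (x : X) : set X :=
  [set u | (dH phi x u <= 0)%E].

End Defs.

From HB Require Import structures.
From mathcomp Require Import all_boot all_order all_algebra.
From mathcomp Require Import all_classical all_reals all_analysis.
From mathcomp Require Import ring lra.
Set Implicit Arguments. Unset Strict Implicit. Unset Printing Implicit Defensive.
Import Order.TTheory GRing.Theory Num.Theory.
Import numFieldNormedType.Exports.
Local Open Scope classical_set_scope.
Local Open Scope ring_scope.

(* (i) If phi'_H(x; h) < r at a boundary point x, then phi(x + t h') < t r for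
   small t > 0 and h' near h.  The error bound gives a point s of S_phi within
   about tau t r of x + t h', and the Shapiro property at x makes s - x a
   tangent direction up to o(t).  As phi(x) = 0, the tangent cone at x lies in
   S_x, so dividing by t yields d(h, S_x) <= tau r + o(1).
   (ii) Let x be near xbar with phi(x) = p > 0.  Ekeland's principle for
   |x - .| on S_phi gives z in S_phi with |x - z| <= |x - y| + |y - z| / 2 for
   all y in S_phi; z is then a boundary point, and the inequality survives
   passing to tangent directions at z.  The epigraphical Shapiro property at
   (z, 0) approximates (x - z, p) by an epi-tangent (v, w), so
   phi'_H(z; v) <= w; the directional error bound moves v to some t in S_x,
   which is tangent by the hypothesis of (ii).  Comparing these estimates
   forces |x - z| = O(p), hence d(x, S_phi) = O(p). *)

Section Distance.
Context {R : realType} {X : normedModType R}.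

Lemma dist_le_norm (x y : X) (D : set X) : D y -> (dist x D <= `|x - y|%:E)%E.
Proof. by move=> Dy; apply: ereal_inf_lbound; exists y. Qed.

Lemma mem_dist_le0 (x : X) (D : set X) : D x -> (dist x D <= 0)%E.
Proof. by move/(dist_le_norm x); rewrite subrr normr0. Qed.

Lemma dist_lt_norm (x : X) (D : set X) (r : R) :
  (dist x D < r%:E)%E -> exists2 y, D y & `|x - y| < r.
Proof. by move=> /ereal_inf_lt [_ [y Dy <-]]; rewrite lte_fin; exists y. Qed.

Lemma dist_sum_lt_norm (p : X * R) (D : set (X * R)) (r : R) :
  (dist_sum p D < r%:E)%E -> exists2 q, D q & `|p.1 - q.1| + `|p.2 - q.2| < r.
Proof. by move=> /ereal_inf_lt [_ [q Dq <-]]; rewrite lte_fin; exists q. Qed.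

End Distance.

Lemma cvg_natSinv_dist {R : realType} (V : normedModType R) (u : nat -> V) (l : V) :
  (forall n, `|u n - l| < n.+1%:R^-1) -> u @ \oo --> l.
Proof.
move=> ul; apply/cvgrPdist_lt => e e0; near=> n; rewrite distrC.
by apply: lt_trans (ul n) _; near: n; exact: (near_infty_natSinv_lt (PosNum e0)).
Unshelve. all: by end_near. Qed.

Lemma le0_natSinv {R : realType} (a : R) : (forall k, a <= k.+1%:R^-1) -> a <= 0.
Proof.
move=> ak; apply/ler_addgt0Pr => c c0; rewrite add0r.
have [N _ /(_ N (leqnn N)) Nc] := near_infty_natSinv_lt (PosNum c0).
exact: le_trans (ak N) (ltW Nc).
Qed.

Section DirectionalDerivative.
Context {R : realType} {X : normedModType R}.
Implicit Types (phi : X -> \bar R) (x h v : X).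

Lemma dH_le_cvg phi x v (vn : nat -> X) (tn wn : nat -> R) (w : R) :
  vn @ \oo --> v -> (forall n, 0 < tn n) -> tn @ \oo --> 0 -> wn @ \oo --> w ->
  (forall n, ((phi (x + tn n *: vn n)%R - phi x) * ((tn n)^-1)%:E <= (wn n)%:E)%E) ->
  (dH phi x v <= w%:E)%E.
Proof.
move=> vv tn_gt0 t0 ww quot_le.
apply: ge_ereal_sup => _ [eps eps0 <-]; apply/lee_addgt0Pr => c c0.
have [N _ /(_ N (leqnn N)) [tN vN wN]] :
    \forall n \near \oo, [/\ `|tn n| < eps, `|v - vn n| < eps & `|w - wn n| < c].
  by near=> n; split; near: n; [apply: cvgr0_norm_lt|apply: cvgr_dist_lt..].
apply: ge_ereal_inf.
exists ((phi (x + tn N *: vn N)%R - phi x) * ((tn N)^-1)%:E)%E.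
  by exists (tn N, vn N) => //=; rewrite tn_gt0 -(gtr0_norm (tn_gt0 N)) tN distrC.
apply: le_trans (quot_le N) _; rewrite -EFinD lee_fin.
by have := ler_norm (wn N - w); rewrite distrC in wN; lra.
Unshelve. all: by end_near. Qed.

Lemma dH_lt_witness phi x h (r eps : R) : phi x = 0%E -> 0 < eps ->
  (dH phi x h < r%:E)%E -> exists th : R * X,
    [/\ 0 < th.1 < eps, `|th.2 - h| < eps & (phi (x + th.1 *: th.2)%R < (th.1 * r)%:E)%E].
Proof.
move=> phix0 eps0 dHr.
have : (ereal_inf [set ((phi (x + th.1 *: th.2)%R - phi x) * (th.1^-1)%:E)%E
    | th in [set th : R * X | (0 < th.1 < eps)%R /\ (`|th.2 - h| < eps)%R]] < r%:E)%E.
  by apply: le_lt_trans dHr; apply: ereal_sup_ubound; exists eps.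
move=> /ereal_inf_lt [_ [th [/andP[t0 teps] th2] <-]].
rewrite phix0 sube0 lte_pdivrMr // -EFinM mulrC => phi_lt.
by exists th; split => //; apply/andP.
Qed.

End DirectionalDerivative.

Lemma nbhs_norm_lt {R : realType} {X : normedModType R} (x : X) (U : set X) :
  nbhs x U -> exists2 d : R, 0 < d & forall y, `|y - x| < d -> U y.
Proof.
by move=> /nbhs_normP [d d0 dU]; exists d => // y yx; apply: dU; rewrite /ball_ /= distrC.
Qed.

Section TangentCone.
Context {R : realType} {X : normedModType R}.
Implicit Types (phi : X -> \bar R) (x h v : X).

Lemma tangent_coneZ (C : set X) c v (k : R) : 0 < k ->
  tangent_cone C c v -> tangent_cone C c (k *: v).
Proof.
move=> k0 [vn [tn [vv [tn_gt0 [t0 Cn]]]]].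
exists (fun n => k *: vn n), (fun n => tn n / k); split; first exact: cvgZl_tmp.
split; first by move=> n; rewrite divr_gt0.
split; first by rewrite -(mul0r k^-1); apply: cvgMr_tmp.
by move=> n; rewrite scalerA divfK ?gt_eqF.
Qed.

Lemma tangent_cone_sub_Sx phi x : phi x = 0%E ->
  tangent_cone (Sphi phi) x `<=` Sx phi x.
Proof.
move=> phix0 v [vn [tn [vv [tn_gt0 [t0 Sn]]]]].
apply: (@dH_le_cvg _ _ phi x v vn tn (fun=> 0) 0) => //; first exact: cvg_cst.
by move=> n; rewrite phix0 sube0 lee_pdivrMr // mul0e; exact: Sn.
Qed.

Lemma epi_tangent_cone_dH phi x v (w : R) : phi x = 0%E ->
  epi_tangent_cone phi x 0 (v, w) -> (dH phi x v <= w%:E)%E.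
Proof.
move=> phix0 [vn [wn [tn [vv [ww [tn_gt0 [t0 En]]]]]]].
apply: (@dH_le_cvg _ _ phi x v vn tn wn w) => // n.
by rewrite phix0 sube0 lee_pdivrMr // -EFinM mulrC; have := En n; rewrite /epi /= add0r.
Qed.

Lemma dH_lt0_tangent_cone phi x h : phi x = 0%E ->
  (dH phi x h < 0)%E -> tangent_cone (Sphi phi) x h.
Proof.
move=> phix0 dH_lt0.
have /choice [th th_spec] : forall n : nat, exists th : R * X,
    [/\ 0 < th.1 < n.+1%:R^-1, `|th.2 - h| < n.+1%:R^-1 &
        (phi (x + th.1 *: th.2)%R < (th.1 * 0)%:E)%E].
  by move=> n; apply: dH_lt_witness.
exists (fun n => (th n).2), (fun n => (th n).1); split.
  by apply: cvg_natSinv_dist => n; have [] := th_spec n.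
split; first by move=> n; have [/andP[]] := th_spec n.
split; last by move=> n; have [_ _] := th_spec n; rewrite mulr0 => /ltW.
apply: cvg_natSinv_dist => n; have [/andP[t0 t1] _ _] := th_spec n.
by rewrite subr0 gtr0_norm.
Qed.

Lemma Sx_sub_tangent_cone phi x : phi x = 0%E ->
  [set h | dH phi x h = 0%E] `<=` tangent_cone (Sphi phi) x ->
  Sx phi x `<=` tangent_cone (Sphi phi) x.
Proof.
move=> phix0 dH0_tc h; rewrite /Sx /= le_eqVlt => /orP[/eqP|]; first exact: dH0_tc.
exact: dH_lt0_tangent_cone.
Qed.

Lemma interior_tangent_cone (C : set X) c v :
  interior C c -> tangent_cone C c v.
Proof.
move=> /nbhs_norm_lt [r r0 rC].
pose d := r / (`|v| + 1).
have v1 : 0 < `|v| + 1 by rewrite ltr_wpDl.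
have d0 : 0 < d by rewrite divr_gt0.
have dv1 : d * (`|v| + 1) = r by rewrite divfK ?gt_eqF.
exists (fun=> v), (fun n => d * n.+1%:R^-1); split; first exact: cvg_cst.
split; first by move=> n; rewrite mulr_gt0 ?invr_gt0.
split; first by rewrite -(mulr0 d); exact: cvgMl_tmp cvg_harmonic.
move=> n; apply: rC; rewrite (addrC c) addrK normrZ gtr0_norm ?mulr_gt0 ?invr_gt0 //.
have dn : d * n.+1%:R^-1 <= d by apply: ler_piMr; [exact: ltW | rewrite invf_le1 // ler1n].
move: (ler_wpM2r (normr_ge0 v) dn); set q := d * _; lra.
Qed.

End TangentCone.

Section Ekeland.
Context {R : realType} {X : completeNormedModType R}.
Variables (S : set X) (x : X) (e : R).
Hypotheses (S_closed : closed S) (e_gt0 : 0 < e).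

Definition ekeland_set (w : X) : set X :=
  [set y | S y /\ `|x - y| + e * `|y - w| <= `|x - w|].

Lemma ekeland_set_refl w : S w -> ekeland_set w w.
Proof. by move=> Sw; split; rewrite // subrr normr0 mulr0 addr0. Qed.

Lemma ekeland_set_trans w w' y :
  ekeland_set w w' -> ekeland_set w' y -> ekeland_set w y.
Proof.
move=> [_ w'w] [Sy yw']; split => //.
have tri : e * `|y - w| <= e * `|y - w'| + e * `|w' - w|.
  by rewrite -mulrDr ler_pM2l // ler_distD.
lra.
Qed.

Lemma ekeland_set_closed w : closed (ekeland_set w).
Proof.
pose g y := `|x - y| + e * `|y - w|.
have g_cont : continuous g.
  move=> y; apply: cvgD; first by apply: cvg_norm; apply: cvgB; [exact: cvg_cst|exact: cvg_id].
  by apply: cvgMl_tmp; apply: cvg_norm; apply: cvgB; [exact: cvg_id|exact: cvg_cst].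
change (closed (S `&` g @^-1` [set r | r <= `|x - w|])).
apply: closedI => //; move/continuous_closedP : g_cont; apply.
exact: closed_le.
Qed.

(* A point that almost minimises [|x - .|] on [ekeland_set w] makes its own
   Ekeland set small *)
Lemma ekeland_step w (d : R) : S w -> 0 < d ->
  exists2 w', ekeland_set w w' & forall y, ekeland_set w' y -> e * `|y - w'| <= d.
Proof.
move=> Sw d0.
have nE : ((fun y => `|x - y|) @` ekeland_set w) !=set0.
  by exists `|x - w|, w => //; exact: ekeland_set_refl.
have lbE : has_lbound ((fun y => `|x - y|) @` ekeland_set w).
  by exists 0 => _ [y _ <-].
have [_ [w' Ew' <-] w'_lt] := inf_adherent d0 (conj nE lbE).
exists w' => // y Ey.
have : inf ((fun y => `|x - y|) @` ekeland_set w) <= `|x - y|.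
  by apply: ge_inf => //; exists y => //; exact: ekeland_set_trans Ew' Ey.
by case: Ey => _; lra.
Qed.

Lemma ekeland_seq z0 : S z0 -> exists zs : nat -> X,
  [/\ zs 0%N = z0, forall k, ekeland_set (zs k) (zs k.+1) &
      forall k y, ekeland_set (zs k.+1) y -> e * `|y - zs k.+1| <= k.+1%:R^-1].
Proof.
move=> Sz0.
have /choice [g g_spec] : forall p : nat * X, exists w', S p.2 ->
    ekeland_set p.2 w' /\ forall y, ekeland_set w' y -> e * `|y - w'| <= p.1.+1%:R^-1.
  move=> [k w]; have [Sw|] := pselect (S w); last by exists w.
  have k_gt0 : 0 < k.+1%:R^-1 :> R by rewrite invr_gt0.
  by have [w' ? ?] := ekeland_step Sw k_gt0; exists w'.
pose fix zs n := if n is k.+1 then g (k, zs k) else z0.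
have Szs k : S (zs k) by elim: k => // k IH; exact: ((g_spec (k, zs k)) IH).1.1.
by exists zs; split => // k; have [] := g_spec (k, zs k) (Szs k).
Qed.

Section EkelandSequence.
Variable zs : nat -> X.
Hypotheses (S_zs0 : S (zs 0%N)) (zs_step : forall k, ekeland_set (zs k) (zs k.+1))
  (zs_small : forall k y, ekeland_set (zs k.+1) y -> e * `|y - zs k.+1| <= k.+1%:R^-1).

Lemma ekeland_set_zs k m : (k <= m)%N -> ekeland_set (zs k) (zs m).
Proof.
elim: m => [|m IH]; first by rewrite leqn0 => /eqP ->; exact: ekeland_set_refl.
rewrite leq_eqVlt => /orP[/eqP ->|/IH Ekm]; last exact: ekeland_set_trans Ekm (zs_step m).
exact: ekeland_set_refl (zs_step m).1.
Qed.

Lemma ekeland_zs_cvg : cvg (zs @ \oo).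
Proof.
apply: cauchy_cvg; apply: cauchy_exP => eps eps0.
have [k _ /(_ k (leqnn k)) k_lt] := near_infty_natSinv_lt (PosNum (mulr_gt0 e_gt0 eps0)).
exists (zs k.+1), k.+1 => // m /= km.
rewrite -ball_normE /ball_ /= distrC -(ltr_pM2l e_gt0).
exact: le_lt_trans (zs_small (ekeland_set_zs km)) k_lt.
Qed.

Variable z : X.
Hypothesis zs_z : zs @ \oo --> z.

Lemma ekeland_set_lim k : ekeland_set (zs k) z.
Proof.
apply: (closed_cvg _ (@ekeland_set_closed (zs k)) _ _ zs_z).
by near=> n; apply: ekeland_set_zs; near: n; exact: nbhs_infty_ge.
Unshelve. all: by end_near. Qed.

Lemma ekeland_set_lim_eq y : ekeland_set z y -> y = z.
Proof.
move=> Ey; apply/eqP; rewrite -subr_eq0 -normr_le0.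
rewrite -(pmulr_rle0 _ (divr_gt0 e_gt0 (ltr0Sn _ 1))); apply: le0_natSinv => k.
have y_near := zs_small (ekeland_set_trans (ekeland_set_lim k.+1) Ey).
have z_near := zs_small (ekeland_set_lim k.+1).
have : e * `|y - z| <= e * `|y - zs k.+1| + e * `|z - zs k.+1|.
  by rewrite -mulrDr ler_pM2l // [`|z - _|]distrC ler_distD.
rewrite mulrAC; set B := k.+1%:R^-1 in y_near z_near *; lra.
Qed.

End EkelandSequence.

Lemma ekeland_dist z0 : S z0 -> exists z, [/\ S z,
  `|x - z| + e * `|z - z0| <= `|x - z0| &
  forall y, S y -> `|x - z| <= `|x - y| + e * `|y - z|].
Proof.
move=> Sz0; have [zs [zs0 zs_step zs_small]] := ekeland_seq Sz0.
have S_zs0 : S (zs 0%N) by rewrite zs0.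
have [z zs_z] := iffLR (cvg_ex _) (ekeland_zs_cvg S_zs0 zs_step zs_small).
have [Sz z_z0] := ekeland_set_lim S_zs0 zs_step zs_z 0; rewrite zs0 in z_z0.
exists z; split => // y Sy; rewrite leNgt; apply/negP => y_lt.
have yz := ekeland_set_lim_eq S_zs0 zs_step zs_small zs_z (conj Sy (ltW y_lt)).
by move: y_lt; rewrite yz subrr normr0 mulr0 addr0 ltxx.
Qed.

End Ekeland.

Lemma lee_mul_maxe_approx {R : realType} (d a : \bar R) (tau : R) : 0 < tau ->
  (forall r eta : R, 0 < r -> 0 < eta -> (a < r%:E)%E -> (d <= (tau * r + eta)%:E)%E) ->
  (d <= tau%:E * maxe a 0)%E.
Proof.
move=> tau0 approx.
have le_m (m : R) : 0 <= m -> (forall r, m < r -> (a < r%:E)%E) -> (d <= (tau * m)%:E)%E.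
  move=> m0 am; apply/lee_addgt0Pr => c c0.
  have ct0 : 0 < c / (2 * tau) by rewrite divr_gt0 ?mulr_gt0.
  have := approx (m + c / (2 * tau)) (c / 2) (ltr_wpDl m0 ct0) (divr_gt0 c0 (ltr0Sn _ 1)).
  have -> : tau * (m + c / (2 * tau)) + c / 2 = tau * m + c by field; rewrite gt_eqF.
  by rewrite EFinD; apply; apply: am; rewrite ltrDl.
case: a {approx} le_m => [a| |] le_m.
- rewrite -EFin_max -EFinM; apply: le_m; first by rewrite le_max lexx orbT.
  by move=> r; rewrite gt_max lte_fin => /andP[].
- by rewrite maxye gt0_muley ?lte_fin // leey.
- by rewrite maxNye mule0; have := le_m 0 (lexx _) (fun r _ => ltNyr r); rewrite mulr0.
Qed.

Section DirectionalErrorBound.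
Context {R : realType} {X : normedModType R}.
Implicit Types (phi : X -> \bar R) (x h v : X).

Lemma dist_Sx_le_tangent phi x h v (t : R) : phi x = 0%E -> 0 < t ->
  tangent_cone (Sphi phi) x v -> (dist h (Sx phi x) <= (t^-1 * `|t *: h - v|)%:E)%E.
Proof.
move=> phix0 t0 Tv; have Tv' : Sx phi x (t^-1 *: v).
  by apply: tangent_cone_sub_Sx => //; apply: tangent_coneZ => //; rewrite invr_gt0.
apply: le_trans (dist_le_norm _ Tv') _; rewrite lee_fin.
have -> : h - t^-1 *: v = t^-1 *: (t *: h - v).
  by rewrite scalerBr scalerA mulVf ?gt_eqF // scale1r.
by rewrite normrZ gtr0_norm ?invr_gt0.
Qed.

Lemma dist_Sx_le_secant phi x h h' s (t eps1 : R) : phi x = 0%E -> 0 < t ->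
  (dist (s - x)%R (tangent_cone (Sphi phi) x) <= (eps1 * `|s - x|)%:E)%E ->
  (dist h (Sx phi x) <= (`|h - h'| + (`|x + t *: h' - s| + eps1 * `|s - x|) / t)%:E)%E.
Proof.
move=> phix0 t0 Tsx; apply/lee_addgt0Pr => c c0.
have [v Tv sv] : exists2 v, tangent_cone (Sphi phi) x v &
    `|s - x - v| < eps1 * `|s - x| + t * c.
  by apply: dist_lt_norm; apply: le_lt_trans Tsx _; rewrite lte_fin ltrDl mulr_gt0.
apply: le_trans (dist_Sx_le_tangent h phix0 t0 Tv) _.
rewrite -EFinD lee_fin mulrC ler_pdivrMr //.
have -> : (`|h - h'| + (`|x + t *: h' - s| + eps1 * `|s - x|) / t + c) * t
    = t * `|h - h'| + `|x + t *: h' - s| + eps1 * `|s - x| + t * c.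
  by field; rewrite gt_eqF.
have secant : t *: h' - (s - x) = x + t *: h' - s by rewrite opprB addrCA addrA.
have := ler_distD (s - x) (t *: h) v; have := ler_distD (t *: h') (t *: h) (s - x).
by rewrite -scalerBr normrZ gtr0_norm // secant; lra.
Qed.

Lemma dist_Sx_le_of_dH_lt phi x h (tau rho r eta : R) :
  phi x = 0%E -> shapiro_at (Sphi phi) x ->
  0 < tau -> 0 < rho -> 0 < r -> 0 < eta ->
  (forall y, `|y - x| < rho -> (dist y (Sphi phi) <= tau%:E * maxe (phi y) 0)%E) ->
  (dH phi x h < r%:E)%E -> (dist h (Sx phi x) <= (tau * r + eta)%:E)%E.
Proof.
move=> phix0 shap tau0 rho0 r0 eta0 EB dHr.
pose kap := eta / 4; pose K := tau * r + kap + `|h| + 1.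
have kap0 : 0 < kap by rewrite divr_gt0.
have tr0 : 0 < tau * r by rewrite mulr_gt0.
have K0 : 0 < K by rewrite /K; have := normr_ge0 h; lra.
have eps1_gt0 : 0 < eta / (4 * K) by rewrite divr_gt0 ?mulr_gt0.
have [ds ds0 shap_ds] := shap _ eps1_gt0.
pose eps := Num.min (Num.min 1 kap) (Num.min rho ds / K).
have eps0 : 0 < eps by rewrite !lt_min ltr01 kap0 divr_gt0 ?lt_min ?rho0.
have [[t h'] /= [/andP[t0 t_eps] hh' phi_lt]] := dH_lt_witness phix0 eps0 dHr.
have [eps1 eps_kap] : eps <= 1 /\ eps <= kap by rewrite !ge_min !lexx !orbT.
have /andP[tK_rho tK_ds] : (t * K < rho) && (t * K < ds).
  rewrite -lt_min -ltr_pdivlMr //; apply: lt_le_trans t_eps _.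
  by rewrite ge_min lexx orbT.
have tK_split : t * K = t * (tau * r + kap) + t * (`|h| + 1) by rewrite -mulrDr !addrA.
have th' : t * `|h'| < t * (`|h| + 1).
  by rewrite ltr_pM2l //; have := ler_distD h h' 0; rewrite !subr0; lra.
have t_trk0 : 0 <= t * (tau * r + kap) by rewrite mulr_ge0 ?addr_ge0 ?ltW.
set y := x + t *: h' in phi_lt *.
have yx : `|y - x| = t * `|h'| by rewrite /y addrAC subrr add0r normrZ gtr0_norm.
have dist_y : (dist y (Sphi phi) < (t * (tau * r + kap))%:E)%E.
  have y_rho : `|y - x| < rho by rewrite yx; lra.
  apply: le_lt_trans (EB y y_rho) _; apply: (@le_lt_trans _ _ (tau * (t * r))%:E).
    rewrite EFinM; apply: lee_pmul => //; first by rewrite lee_fin ltW.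
      by rewrite le_max lexx orbT.
    by rewrite ge_max (ltW phi_lt) lee_fin mulr_ge0 ?ltW.
  by rewrite lte_fin mulrDr mulrCA ltrDl mulr_gt0.
have [s Ss ys] := dist_lt_norm dist_y.
have sx : `|s - x| < t * K by have := ler_distD y s x; rewrite distrC in ys; lra.
have Sx0 : Sphi phi x by rewrite /Sphi /= phix0.
have xx : `|x - x| < ds by rewrite subrr normr0.
apply: le_trans (dist_Sx_le_secant h h' phix0 t0 (shap_ds s x Ss Sx0 (lt_trans sx tK_ds) xx)) _.
rewrite -/y.
have sx_eta : eta / (4 * K) * `|s - x| <= t * (eta / 4).
  have -> : t * (eta / 4) = eta / (4 * K) * (t * K) by field; rewrite gt_eqF.
  by rewrite ler_pM2l ?(ltW sx) // divr_gt0 ?mulr_gt0.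
have : (`|y - s| + eta / (4 * K) * `|s - x|) / t <= tau * r + eta / 2.
  by rewrite ler_pdivrMr //; move: ys; rewrite /kap; lra.
by rewrite lee_fin (distrC h); move: hh' eps_kap; rewrite /kap; lra.
Qed.

End DirectionalErrorBound.

Lemma directional_error_bound {R : realType} {X : normedModType R}
    (phi : X -> \bar R) (xbar : X) (tau delta0 : R) :
  bd (Sphi phi) `<=` [set x | phi x = 0%E] -> shapiro_around (Sphi phi) xbar ->
  0 < tau -> 0 < delta0 ->
  (forall x, `|x - xbar| < delta0 -> (dist x (Sphi phi) <= tau%:E * maxe (phi x) 0)%E) ->
  exists2 delta : R, 0 < delta & forall x, bd (Sphi phi) x -> `|x - xbar| < delta ->
    forall h, (dist h (Sx phi x) <= tau%:E * maxe (dH phi x h) 0)%E.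
Proof.
move=> bd_zero [U U_xbar shapU] tau0 delta0_gt0 EB.
have [d1 d1_gt0 d1U] := nbhs_norm_lt U_xbar.
exists (Num.min delta0 d1); first by rewrite lt_min delta0_gt0 d1_gt0.
move=> x bx; rewrite lt_min => /andP[x_d0 x_d1] h.
have phix0 := bd_zero x bx.
have Sx0 : Sphi phi x by rewrite /Sphi /= phix0.
apply: lee_mul_maxe_approx => // r eta r0 eta0 dHr.
have rho0 : 0 < delta0 - `|x - xbar| by rewrite subr_gt0.
apply: (dist_Sx_le_of_dH_lt phix0 (shapU x Sx0 (d1U x x_d1)) tau0 rho0 r0 eta0 _ dHr).
by move=> y yx; apply: EB; have := ler_distD x y xbar; lra.
Qed.

Section EkelandPoints.
Context {R : realType} {X : normedModType R}.
Variables (S : set X) (x z : X) (e : R).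
Hypothesis z_ekeland : forall y, S y -> `|x - z| <= `|x - y| + e * `|y - z|.

Lemma ekeland_secant u (s : R) : 0 < s < 1 -> S (z + s *: u) ->
  `|x - z| <= `|x - z - u| + e * `|u|.
Proof.
move=> /andP[s0 s1] Su; have := z_ekeland Su.
rewrite addrAC subrr add0r normrZ gtr0_norm // => ek.
have conv : `|x - (z + s *: u)| <= (1 - s) * `|x - z| + s * `|x - z - u|.
  have -> : x - (z + s *: u) = (1 - s) *: (x - z) + s *: (x - z - u).
    by rewrite scalerBl scale1r [s *: (x - z - u)]scalerBr addrA subrK opprD addrA.
  apply: le_trans (ler_normD _ _) _.
  by rewrite !normrZ (gtr0_norm s0) ger0_norm // subr_ge0 ltW.
by rewrite -(ler_pM2l s0); lra.
Qed.

Lemma ekeland_tangent_cone t : tangent_cone S z t -> `|x - z| <= `|x - z - t| + e * `|t|.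
Proof.
move=> [un [sn [un_t [sn_gt0 [sn0 Sn]]]]].
pose g u := `|x - z - u| + e * `|u|.
have g_cont : continuous g.
  move=> u; apply: cvgD; first by apply: cvg_norm; apply: cvgB; [exact: cvg_cst|exact: cvg_id].
  by apply: cvgMl_tmp; exact: norm_continuous.
apply: (closed_cvg [set u | `|x - z| <= g u] _ _ _ un_t).
  change (closed (g @^-1` [set r | `|x - z| <= r])).
  by move/continuous_closedP : g_cont; apply; exact: closed_ge.
have : \forall n \near \oo, `|sn n| < 1 by apply: cvgr0_norm_lt.
apply: filterS => n; rewrite gtr0_norm // => sn1.
by apply: ekeland_secant (Sn n); rewrite sn_gt0.
Qed.

Lemma ekeland_not_interior : e < 1 -> x != z -> ~ interior S z.
Proof.
move=> e1 xz /(interior_tangent_cone (x - z)) /ekeland_tangent_cone.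
rewrite subrr normr0 add0r -[X in X <= _]mul1r ler_pM2r ?normr_gt0 ?subr_eq0 //.
by rewrite leNgt e1.
Qed.

End EkelandPoints.

Lemma Sphi_closed {R : realType} {X : normedModType R} (phi : X -> \bar R) :
  lower_semicontinuous phi -> closed (Sphi phi).
Proof.
move=> /lower_semicontinuousP /(_ 0) phi_gt0_open.
have -> : Sphi phi = ~` [set x | (0%:E < phi x)%E].
  by apply/funext => x; apply/propext; rewrite /Sphi /= leNgt; split => /negP.
exact: open_closedC.
Qed.

Section ErrorBoundFromDirectional.
Context {R : realType} {X : normedModType R}.
Implicit Types (phi : X -> \bar R).

Lemma ekeland_point_lt phi (x z : X) (p tau : R) :
  0 <= tau -> 0 < p -> phi z = 0%E ->
  (forall y, Sphi phi y -> `|x - z| <= `|x - y| + 2^-1 * `|y - z|) ->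
  Sx phi z `<=` tangent_cone (Sphi phi) z ->
  (forall h, (dist h (Sx phi z) <= tau%:E * maxe (dH phi z h) 0)%E) ->
  (dist_sum ((x - z)%R, p) (epi_tangent_cone phi z 0)
    <= ((12 * (2 + tau))^-1 * (`|x - z| + `|p|))%:E)%E ->
  `|x - z| < (6 * tau + 1) * p.
Proof.
move=> tau0 p0 phiz0 z_ek Sx_T dirEB epi_near.
rewrite gtr0_norm // in epi_near; set A := `|x - z| in z_ek epi_near *.
set eta := (12 * (2 + tau))^-1 * (A + p) in epi_near.
have A0 : 0 <= A := normr_ge0 _.
have tau2 : 0 < 2 + tau by lra.
have eta0 : 0 < eta by rewrite /eta mulr_gt0 ?invr_gt0 ?mulr_gt0 //; lra.
have eta_tau : 4 * eta + 2 * (tau * eta) = (A + p) / 6.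
  by rewrite /eta; field; rewrite gt_eqF.
have /dist_sum_lt_norm [[v w] /= Tvw vw] :
    (dist_sum ((x - z)%R, p) (epi_tangent_cone phi z 0) < (2 * eta)%:E)%E.
  by apply: le_lt_trans epi_near _; rewrite lte_fin; lra.
have dHv := epi_tangent_cone_dH phiz0 Tvw.
have /dist_lt_norm [t Sxt vt] : (dist v (Sx phi z) < (tau * `|w| + 2 * eta)%:E)%E.
  apply: le_lt_trans (dirEB v) _; apply: (@le_lt_trans _ _ (tau * `|w|)%:E).
    rewrite EFinM; apply: lee_pmul => //; first by rewrite le_max lexx orbT.
    by rewrite ge_max lee_fin normr_ge0 andbT (le_trans dHv) // lee_fin ler_norm.
  by rewrite lte_fin; lra.
have w_le : `|w| <= p + `|p - w| by have := ler_distD p 0 w; rewrite !sub0r !normrN (gtr0_norm p0).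
have tau_w := ler_wpM2l tau0 w_le.
have tau_pw : tau * `|p - w| <= tau * (2 * eta).
  by apply: ler_wpM2l => //; have := normr_ge0 (x - z - v); lra.
have := ekeland_tangent_cone z_ek (Sx_T t Sxt).
have := ler_distD v (x - z) t; have := ler_distD (x - z) 0 t.
have := normr_ge0 (p - w); rewrite !sub0r !normrN -/A; lra.
Qed.

End ErrorBoundFromDirectional.

Section LocalErrorBound.
Context {R : realType} {X : completeNormedModType R}.
Implicit Types (phi : X -> \bar R).

Lemma error_bound_near phi (xbar : X) (tau r : R) :
  lower_semicontinuous phi -> Sphi phi xbar -> phi xbar = 0%E ->
  bd (Sphi phi) `<=` [set x | phi x = 0%E] -> 0 <= tau ->
  (forall z, bd (Sphi phi) z -> `|z - xbar| < r ->
    Sx phi z `<=` tangent_cone (Sphi phi) z) ->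
  (forall z, bd (Sphi phi) z -> `|z - xbar| < r ->
    forall h, (dist h (Sx phi z) <= tau%:E * maxe (dH phi z h) 0)%E) ->
  (forall p q, epi phi p -> epi phi q ->
    (`|p.1 - xbar|%:E + `|p.2%:E - phi xbar| < r%:E)%E ->
    (`|q.1 - xbar|%:E + `|q.2%:E - phi xbar| < r%:E)%E ->
    (dist_sum ((p.1 - q.1)%R, (p.2 - q.2)%R) (epi_tangent_cone phi q.1 q.2)
      <= ((12 * (2 + tau))^-1 * (`|p.1 - q.1| + `|p.2 - q.2|))%:E)%E) ->
  forall x, `|x - xbar| < r / 4 ->
    (dist x (Sphi phi) <= (6 * tau + 1)%:E * maxe (phi x) 0)%E.
Proof.
move=> lsc Sxbar phixbar0 bd_zero tau0 Sx_T dirEB epi_r x xr.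
have tau1 : 0 < 6 * tau + 1 by lra.
have [Sx0|nSx] := pselect (Sphi phi x).
  apply: le_trans (mem_dist_le0 Sx0) _.
  by apply: mule_ge0; rewrite ?lee_fin ?le_max ?lexx ?orbT // ltW.
case phix : (phi x) nSx => [p| |] nSx; last first.
- by exfalso; apply: nSx; rewrite /Sphi /= phix leNye.
- by rewrite maxye gt0_muley ?lte_fin // leey.
have p0 : 0 < p by rewrite ltNge; apply/negP => p_le0; apply: nSx; rewrite /Sphi /= phix lee_fin.
rewrite -EFin_max (max_l (ltW p0)) -EFinM.
have half_gt0 : 0 < 2^-1 :> R by rewrite invr_gt0.
have [z [Sz z_xbar z_ek]] := ekeland_dist x (Sphi_closed lsc) half_gt0 Sxbar.
apply: le_trans (dist_le_norm x Sz) _; rewrite lee_fin.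
have := normr_ge0 (z - xbar); have := normr_ge0 (x - z); have := normr_ge0 (x - xbar).
move=> xxbar0 xz0 zxbar0.
have [p_big|p_small] := leP `|x - xbar| ((6 * tau + 1) * p); first lra.
have xz : x != z by apply/eqP => xz; apply: nSx; rewrite xz.
have bz : bd (Sphi phi) z.
  split; first exact: subset_closure.
  by apply: ekeland_not_interior z_ek _ xz; lra.
have zr : `|z - xbar| < r by lra.
apply/ltW/(ekeland_point_lt tau0 p0 (bd_zero z bz) z_ek (Sx_T z bz zr) (dirEB z bz zr)).
have epi_xp : epi phi (x, p) by rewrite /epi /= phix.
have epi_z0 : epi phi (z, 0) by rewrite /epi /= (bd_zero z bz).
have := epi_r _ _ epi_xp epi_z0; rewrite /= phixbar0 !sube0 subr0 abse0 adde0 abse_EFin.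
apply; rewrite -?EFinD lte_fin ?(gtr0_norm p0); have := mulr_ge0 tau0 (ltW p0); lra.
Qed.

Lemma local_error_bound_of_directional phi (xbar : X) :
  lower_semicontinuous phi -> Sphi phi xbar ->
  bd (Sphi phi) `<=` [set x | phi x = 0%E] -> epi_shapiro_at phi xbar ->
  (exists2 U, nbhs xbar U & forall x, U x -> bd (Sphi phi) x ->
    [set h | dH phi x h = 0%E] `<=` tangent_cone (Sphi phi) x) ->
  (exists tau delta : R, [/\ 0 < tau, 0 < delta &
    forall x, bd (Sphi phi) x -> `|x - xbar| < delta ->
      forall h : X, (dist h (Sx phi x) <= tau%:E * maxe (dH phi x h) 0)%E]) ->
  local_error_bound phi xbar.
Proof.
move=> lsc Sxbar bd_zero epi_sh [U U_xbar dH0_T] [tau [delta [tau0 delta0 dirEB]]].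
have [xbar_int|xbar_nint] := pselect (interior (Sphi phi) xbar).
  have [r r0 rS] := nbhs_norm_lt xbar_int.
  exists 1, r; split => // x xr; apply: le_trans (mem_dist_le0 (rS x xr)) _.
  by rewrite mule_ge0 ?lee_fin // le_max lexx orbT.
have phixbar0 : phi xbar = 0%E by apply: bd_zero; split => //; exact: subset_closure.
have [dU dU0 dUU] := nbhs_norm_lt U_xbar.
have eta0 : 0 < (12 * (2 + tau))^-1 by rewrite invr_gt0 mulr_gt0 //; lra.
have [de de0 epi_de] := epi_sh _ eta0.
pose r := Num.min delta (Num.min dU de).
have [r_delta r_dU r_de] : [/\ r <= delta, r <= dU & r <= de] by rewrite !ge_min !lexx !orbT.
exists (6 * tau + 1), (r / 4); split; first lra.
  by rewrite divr_gt0 // !lt_min delta0 dU0 de0.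
apply: (error_bound_near lsc Sxbar phixbar0 bd_zero (ltW tau0)).
- move=> z bz zr; apply: Sx_sub_tangent_cone (bd_zero z bz) _.
  exact: dH0_T z (dUU z (lt_le_trans zr r_dU)) bz.
- by move=> z bz zr; apply: dirEB bz (lt_le_trans zr r_delta).
- move=> p q ep eq pr qr; apply: epi_de => //.
    by apply: lt_le_trans pr _; rewrite lee_fin.
  by apply: lt_le_trans qr _; rewrite lee_fin.
Qed.

End LocalErrorBound.

Theorem corollary4p1 (R : realType) (X : completeNormedModType R)
    (phi : X -> \bar R) (xbar : X) :
  proper_fun phi -> lower_semicontinuous phi ->
  Sphi phi xbar ->
  bd (Sphi phi) `<=` [set x | phi x = 0%E] ->
  epi_shapiro_at phi xbar ->
  shapiro_around (Sphi phi) xbar ->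
  (* (i) *)
  (forall tau delta0 : R, 0 < tau -> 0 < delta0 ->
    (forall x, `|x - xbar| < delta0 ->
       (dist x (Sphi phi) <= tau%:E * maxe (phi x) 0)%E) ->
    exists2 delta : R, 0 < delta &
      forall x, bd (Sphi phi) x -> `|x - xbar| < delta ->
        forall h : X,
          (dist h (Sx phi x) <= tau%:E * maxe (dH phi x h) 0)%E)
  /\
  (* (ii) *)
  ((exists2 U, nbhs xbar U &
      forall x, U x -> bd (Sphi phi) x ->
        [set h | dH phi x h = 0%E] `<=` tangent_cone (Sphi phi) x) ->
   (local_error_bound phi xbar <->
    exists tau delta : R, [/\ 0 < tau, 0 < delta &
      forall x, bd (Sphi phi) x -> `|x - xbar| < delta ->
        forall h : X,
          (dist h (Sx phi x) <= tau%:E * maxe (dH phi x h) 0)%E])).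
Proof.
move=> _ lsc Sxbar bd_zero epi_sh shap.
split=> [tau delta0 tau0 delta0_gt0 EB|dH0_T].
  exact: directional_error_bound bd_zero shap tau0 delta0_gt0 EB.
split; last exact: local_error_bound_of_directional.
move=> [tau [delta [tau0 delta0 EB]]].
by have [d d0 dEB] := directional_error_bound bd_zero shap tau0 delta0 EB; exists tau, d.
Qed.
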